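(* Fix $m\ge 1$, a partition $\xi$ with all parts $\le m$, and $\mu\in\mathbb Z_{\ge0}$ with $\mu=\mu_1m+\mu_0$, $0\le\mu_0<m$. Let $t=\#\{i:\xi_i=m\}$ and assume $k:=\mu_1+1-t\ge 0$. Let $\alpha_0:=m-\mu_0-1$ and let $\alpha_1,\dots,\alpha_L$ be the parts of $\xi$ strictly smaller than $m$, listed with multiplicity, so that \[ F_{\xi,m,\mu}(x)=\frac{p_{m-\mu_0-1}(x)p_\xi(x)}{p_m(x)^{\mu_1+1}}=\frac{\prod_{i=0}^L p_{\alpha_i}(x)}{p_m(x)^k}=\sum_{r\ge0}a_rx^r. \] Then for every $r\ge 0$, \[ a_r=\sum_{\substack{j_0,\dots,j_L\ge 0,\ u_1,\dots,u_k\ge 0\\ j_0+\cdots+j_L+u_1+\cdots+u_k=r}}(-1)^{j_0+\cdots+j_L}\left(\prod_{i=0}^L\binom{\alpha_i-j_i}{j_i}\right)\left(\prod_{\nu=1}^kB_m(u_\nu)\right), \] where the second product is $1$ if $k=0$. Equivalently, $a_r$ is the signed count of tuples $(M_0,\dots,M_L,\gamma_1,\dots,\gamma_k)$ such that each $M_i$ is a matching in the path graph $P_{\alpha_i}$, each $\gamma_\nu$ is a full-height strip walk of height $m-1$, $|M_0|+\cdots+|M_L|+e(\gamma_1)+\cdots+e(\gamma_k)=r$, and each tuple is counted with sign $(-1)^{|M_0|+\cdots+|M_L|}$.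
   Context: $p_0=p_1=1$, $p_{r+1}(x)=p_r(x)-xp_{r-1}(x)$ ($r\ge1$); $p_\xi=\prod_i p_{\xi_i}$. Convention: $\binom{A}{B}=0$ unless $0\le B\le A$. For $r\ge0$, $P_r$ is the path graph on vertices $1,\dots,r$ with edges $\{i,i+1\}$, $1\le i<r$ ($P_0$ empty); a matching is a set of pairwise disjoint edges, $|M|$ its number of edges. For $m\ge1$ and $0\le a,b\le m-1$, a strip walk of height $m-1$ from $a$ to $b$ of length $L$ is a sequence $(h_0,\dots,h_L)$ of integers with $h_0=a$, $h_L=b$, $h_{i+1}-h_i\in\{\pm1\}$, and $0\le h_i\le m-1$ for all $i$; $w^{(m)}_L(a,b)$ denotes the number of them. A full-height strip walk is one from $0$ to $m-1$; its excess is $e(\gamma)=(L-(m-1))/2$. $B_m(u):=w^{(m)}_{m-1+2u}(0,m-1)$, the number of full-height strip walks of excess $u$. *)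

From mathcomp Require Import all_boot all_order all_algebra.
Set Implicit Arguments. Unset Strict Implicit. Unset Printing Implicit Defensive.
Import Order.TTheory GRing.Theory Num.Theory.
Local Open Scope ring_scope.

Fixpoint pp (r : nat) : {poly int} :=
  match r with
  | 0%N => 1
  | r1.+1 => match r1 with
             | 0%N => 1
             | r2.+1 => pp r1 - 'X * pp r2
             end
  end.

Definition pxi (xi : seq nat) : {poly int} := \prod_(a <- xi) pp a.

(* First n coefficients of the formal power series num/den, for den with
   constant coefficient 1: a_n = num_n - sum_{i=1}^{n} den_i a_{n-i}. *)
Fixpoint sdiv_seq (num den : {poly int}) (n : nat) : seq int :=
  match n with
  | 0%N => [::]
  | n'.+1 => let s := sdiv_seq num den n' in
             rcons s (num`_n' - \sum_(1 <= i < n'.+1) den`_i * s`_(n' - i))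
  end.

Definition fps_coef (num den : {poly int}) (r : nat) : int :=
  (sdiv_seq num den r.+1)`_r.

Definition walk_count (m len a b : nat) : nat :=
  #|[set h : {ffun 'I_len.+1 -> 'I_m} |
      [&& nat_of_ord (h ord0) == a, nat_of_ord (h ord_max) == b &
          [forall i : 'I_len,
              (nat_of_ord (h (inord i.+1)) == (h (inord i)).+1) ||
              ((h (inord i.+1)).+1 == nat_of_ord (h (inord i)))]]]|.

Definition Bm (m u : nat) : nat := walk_count m (m.-1 + u.*2) 0 m.-1.

(* Path graph P_n on vertices 0..n-1 (a relabelling of 1..n); an edge {i,i+1}
   is encoded as the pair (i, i+1). A matching is a set of edges that are
   pairwise vertex-disjoint. *)
Definition is_matching (n : nat) (M : {set 'I_n * 'I_n}) : bool :=
  [forall e in M, nat_of_ord e.2 == (nat_of_ord e.1).+1] &&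
  [forall e1 in M, forall e2 in M, (e1 != e2) ==>
     [&& e1.1 != e2.1, e1.1 != e2.2, e1.2 != e2.1 & e1.2 != e2.2]].

Definition n_matchings (n j : nat) : nat :=
  #|[set M : {set 'I_n * 'I_n} | is_matching M && (#|M| == j)]|.

(* Over the integers, 1/p_m is the generating function, by excess, of the
   full-height strip walks.  Let H_b be the generating function of walks from 0
   to b counted by excess.  Splitting off the last step gives
   H_b = [b = 0] + H_(b-1) + x H_(b+1), which is the recurrence
   p_(c+1) = p_(c+2) + x p_c read along c = m-1-b; hence p_m H_b = p_(m-1-b) and
   in particular p_m H_(m-1) = 1.  So F = (prod_i p_(alpha_i)) (1/p_m)^k and a_r
   is the convolution of the coefficients (-1)^j C(alpha - j, j) of the
   p_alpha with those of H_(m-1).  Finally C(n - j, j) counts the j-matchings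
   of P_n through their sets of left endpoints, which are the j-sets without two
   consecutive elements avoiding the last vertex. *)

From mathcomp Require Import all_boot all_order all_algebra.
From mathcomp Require Import zify.
Set Implicit Arguments. Unset Strict Implicit. Unset Printing Implicit Defensive.
Import Order.TTheory GRing.Theory Num.Theory.
Local Open Scope ring_scope.

(** * Coefficients of products of polynomials *)

Definition ffrcons (T : Type) n (g : {ffun 'I_n -> T}) (x : T) : {ffun 'I_n.+1 -> T} :=
  [ffun i => if unlift ord_max i is Some j then g j else x].

Lemma ffrcons_last (T : Type) n (g : {ffun 'I_n -> T}) x : ffrcons g x ord_max = x.
Proof. by rewrite ffunE unlift_none. Qed.

Lemma lift_max_widen n (j : 'I_n) : lift ord_max j = widen_ord (leqnSn n) j.
Proof. by apply: val_inj; rewrite /= /bump leqNgt ltn_ord. Qed.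

Lemma ffrcons_widen (T : Type) n (g : {ffun 'I_n -> T}) x (i : 'I_n) :
  ffrcons g x (widen_ord (leqnSn n) i) = g i.
Proof. by rewrite -lift_max_widen ffunE liftK. Qed.

Lemma big_ffrcons (R : Type) (idx : R) (op : Monoid.com_law idx) (T : finType) n
    (F : {ffun 'I_n.+1 -> T} -> R) :
  \big[op/idx]_(f : {ffun 'I_n.+1 -> T}) F f =
  \big[op/idx]_(g : {ffun 'I_n -> T}) \big[op/idx]_(x : T) F (ffrcons g x).
Proof.
rewrite pair_big (reindex (fun p : {ffun 'I_n -> T} * T => ffrcons p.1 p.2)) //=.
exists (fun f => ([ffun i => f (widen_ord (leqnSn n) i)], f ord_max)) => [[g x] _|f _] /=.
  by rewrite ffrcons_last; congr pair; apply/ffunP => i; rewrite ffunE ffrcons_widen.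
apply/ffunP => i; rewrite ffunE; case: unliftP => [j ->|->] //.
by rewrite ffunE lift_max_widen.
Qed.

Lemma big_ord_ffrcons (R : Type) (idx : R) (op : Monoid.law idx) (T : Type) n
    (g : {ffun 'I_n -> T}) x (F : 'I_n.+1 -> T -> R) :
  \big[op/idx]_(i < n.+1) F i (ffrcons g x i) =
  op (\big[op/idx]_(i < n) F (widen_ord (leqnSn n) i) (g i)) (F ord_max x).
Proof.
by rewrite big_ord_recr /= ffrcons_last; congr (op _ _); apply: eq_bigr => i _;
  rewrite ffrcons_widen.
Qed.

Lemma forall_ord_recr n (Q : 'I_n.+1 -> bool) :
  [forall i, Q i] = [forall i : 'I_n, Q (widen_ord (leqnSn n) i)] && Q ord_max.
Proof.
apply/forallP/andP => [H|[/forallP H1 H2] i]; first by split=> //; apply/forallP.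
by case: (unliftP ord_max i) => [j ->|->] //; rewrite lift_max_widen.
Qed.

Lemma coef_prod_ffun (R : nzRingType) (L N n : nat) (P : 'I_L -> {poly R}) :
  (n <= N)%N ->
  (\prod_(i < L) P i)`_n =
  \sum_(f : {ffun 'I_L -> 'I_N.+1} | (\sum_(i < L) (f i : nat) == n)%N)
     \prod_(i < L) (P i)`_(f i).
Proof.
elim: L P n => [|L IH] P n nN.
  rewrite big_ord0 coefC (eq_bigl (fun _ => n == 0%N)); last first.
    by move=> f; rewrite big_ord0 eq_sym.
  rewrite (eq_bigr (fun _ => 1)) => [|f _]; last by rewrite big_ord0.
  case: eqP => _; last by rewrite big_pred0.
  by rewrite sumr_const card_ffun !card_ord.
rewrite big_ord_recr coefM.
under eq_bigr => j _.
  rewrite (IH _ j); last by apply: leq_trans nN; rewrite -ltnS.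
  rewrite mulr_suml.
  over.
rewrite (exchange_big_dep xpredT) //= [RHS]big_mkcond big_ffrcons /=.
apply: eq_bigr => g _; set s := (\sum_(i < L) (g i : nat))%N.
rewrite (eq_bigl (fun j : 'I_n.+1 => (j : nat) == s)) => [|j]; last by rewrite eq_sym.
rewrite (big_ord1_eq _ (fun j => \prod_(i < L) (P (widen_ord (leqnSn L) i))`_(g i)
                                   * (P ord_max)`_(n - j))).
under eq_bigr => x _.
  rewrite (big_ord_ffrcons _ _ _ (fun _ (y : 'I_N.+1) => nat_of_ord y)).
  rewrite (big_ord_ffrcons _ _ _ (fun i (y : 'I_N.+1) => (P i)`_y)) /= -/s.
  have -> : (s + x == n)%N = (s <= n)%N && ((x : nat) == n - s)%N.
    by apply/eqP/andP => [<-|[sn /eqP ->]]; [rewrite leq_addr addKn | rewrite subnKC].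
over.
rewrite ltnS; case: leqP => sn; last by rewrite big1.
rewrite -big_mkcond /= (big_ord1_eq _ (fun i => \prod_(i0 < L) (P (widen_ord _ i0))`_(g i0)
  * (P ord_max)`_i)).
by rewrite ltnS (leq_trans (leq_subr _ _) nN).
Qed.

Lemma coef_mul_prod_ffun (R : nzRingType) (L k r : nat)
    (P : 'I_L -> {poly R}) (Q : 'I_k -> {poly R}) :
  (\prod_(i < L) P i * \prod_(v < k) Q v)`_r =
  \sum_(j : {ffun 'I_L -> 'I_r.+1})
    \sum_(u : {ffun 'I_k -> 'I_r.+1}
            | ((\sum_(i < L) (j i : nat)) + (\sum_(v < k) (u v : nat)) == r)%N)
      (\prod_(i < L) (P i)`_(j i)) * \prod_(v < k) (Q v)`_(u v).
Proof.
rewrite coefM.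
under eq_bigr => s _.
  rewrite (coef_prod_ffun _ (N := r) (ltnSE (ltn_ord s))).
  rewrite (coef_prod_ffun _ (N := r) (leq_subr _ _)) mulr_suml.
  under eq_bigr do rewrite mulr_sumr.
  over.
rewrite (exchange_big_dep xpredT) //=; apply: eq_bigr => j _.
set s := (\sum_(i < L) (j i : nat))%N.
rewrite (eq_bigl (fun x : 'I_r.+1 => (x : nat) == s)) => [|x]; last by rewrite eq_sym.
rewrite (big_ord1_eq _ (fun x => \sum_(u : {ffun 'I_k -> 'I_r.+1}
  | (\sum_(v < k) (u v : nat) == r - x)%N)
     (\prod_(i < L) (P i)`_(j i)) * \prod_(v < k) (Q v)`_(u v))) ltnS.
case: leqP => sr.
  by apply: eq_bigl => u; move: (\sum_(v < k) _)%N => t; apply/eqP/eqP; lia.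
by rewrite big_pred0 // => u; move: (\sum_(v < k) _)%N => t; apply/eqP; lia.
Qed.

Lemma binS_sub a i : ('C(a.+1 - i, i.+1) = 'C(a - i, i.+1) + 'C(a - i, i))%N.
Proof.
case: (leqP i a) => ia; first by rewrite subSn // binS.
by rewrite !bin_small //; lia.
Qed.

Lemma coef_pp a j : (pp a)`_j = (-1) ^+ j * ('C(a - j, j))%:Z.
Proof.
suff coef_pp2 : forall a, (forall j, (pp a)`_j = (-1) ^+ j * ('C(a - j, j))%:Z) /\
                          (forall j, (pp a.+1)`_j = (-1) ^+ j * ('C(a.+1 - j, j))%:Z).
  by case: (coef_pp2 a).
clear a j; elim=> [|b [IH1 IH2]].
  by split=> -[|[|j]]; rewrite /= coef1 ?bin0n ?mulr0.
split=> // -[|j]; rewrite [pp _]/= coefB coefXM IH2 /= ?subr0 //.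
rewrite IH1 !subSS exprS mulN1r !mulNr -opprD -mulrDr -PoszD; congr (- (_ * _%:Z)).
by rewrite binS_sub.
Qed.

Lemma coef0_pp_exp m n : (pp m ^+ n)`_0 = 1.
Proof.
elim: n => [|n IH]; first by rewrite expr0 coef1.
by rewrite exprS coef0M IH coef_pp bin0 mulr1.
Qed.

Definition eq_modX (R : nzRingType) (N : nat) (p q : {poly R}) :=
  forall i, (i < N)%N -> p`_i = q`_i.

Lemma eq_modX_mul (R : nzRingType) N (p p' q q' : {poly R}) :
  eq_modX N p p' -> eq_modX N q q' -> eq_modX N (p * q) (p' * q').
Proof.
move=> pp' qq' i iN; rewrite !coefM; apply: eq_bigr => j _.
rewrite pp' ?qq' //; apply: leq_ltn_trans iN; first exact: leq_subr.
by rewrite -ltnS.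
Qed.

Lemma eq_modX_exp1 (R : nzRingType) N (p : {poly R}) k :
  eq_modX N p 1 -> eq_modX N (p ^+ k) 1.
Proof.
move=> p1; elim: k => [|k IH] //; rewrite exprS -[1]mulr1; exact: eq_modX_mul.
Qed.

Lemma fps_coef_eq_modX (num den q : {poly int}) r :
  den`_0 = 1 -> eq_modX r.+1 (den * q) num -> fps_coef num den r = q`_r.
Proof.
move=> den0 dq.
rewrite /fps_coef; suff -> : sdiv_seq num den r.+1 = [seq q`_i | i <- iota 0 r.+1].
  by rewrite (nth_map 0%N) ?size_iota // nth_iota.
elim: {-2}r.+1 (leqnn r.+1) => [|n IH] nr //.
rewrite -addn1 iotaD map_cat cats1 addn1 /= IH ?(ltnW nr) //; congr rcons.
rewrite -(dq n nr) coefM big_ord_recl den0 mul1r subn0 big_add1 big_mkord add0n /=.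
rewrite [X in _ - X](eq_bigr (fun i : 'I_n => den`_(lift ord0 i) * q`_(n - lift ord0 i))).
  by rewrite addrK.
move=> i _; have i_n := ltn_ord i.
by rewrite lift0 (nth_map 0%N) ?size_iota ?nth_iota ?add0n //; lia.
Qed.

(** * Strip walks and the inverse of p_m *)

Section StripWalks.
Local Close Scope ring_scope.
Variable m : nat.

Definition is_step (u v : nat) := (u == v.+1) || (u.+1 == v).

Definition is_walk n (h : {ffun 'I_n.+1 -> 'I_m}) :=
  [forall i : 'I_n, is_step (h (inord i.+1)) (h (inord i))].

Lemma walk_countE n a b :
  walk_count m n a b = \sum_(h : {ffun 'I_n.+1 -> 'I_m})
     [&& nat_of_ord (h ord0) == a, nat_of_ord (h ord_max) == b & is_walk h].
Proof. by rewrite /walk_count -sum1_card big_mkcond; apply: eq_bigr => h _; rewrite inE. Qed.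

Lemma inord_widen n k : k <= n ->
  (inord k : 'I_n.+2) = widen_ord (leqnSn n.+1) (inord k : 'I_n.+1).
Proof. by move=> kn; apply: val_inj; rewrite /= !inordK //; lia. Qed.

Lemma is_walk_ffrcons n (g : {ffun 'I_n.+1 -> 'I_m}) x :
  is_walk (ffrcons g x) = is_walk g && is_step x (g ord_max).
Proof.
rewrite /is_walk forall_ord_recr; congr andb.
  apply: eq_forallb => i /=.
  by rewrite (inord_widen (ltn_ord i)) (inord_widen (ltnW (ltn_ord i))) !ffrcons_widen.
have -> : (inord n.+1 : 'I_n.+2) = ord_max by apply: val_inj; rewrite /= inordK.
rewrite ffrcons_last (inord_widen (leqnn n)) ffrcons_widen; congr (is_step _ (g _ : nat)).
by apply: val_inj; rewrite /= inordK.
Qed.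

Lemma is_step_split b c : c < m -> (is_step b c : nat) =
   ((0 < b) && (c == b.-1)) + ((b.+1 < m) && (c == b.+1)).
Proof.
move=> cm; rewrite /is_step.
by case: (posnP b) => [->|bp]; case: (ltnP b.+1 m) => bm /=; repeat case: eqP => /=; lia.
Qed.

Lemma sum_ord_eq b (Q : nat -> bool) : b < m ->
  \sum_(x < m) ((x == b :> nat) && Q x) = Q b.
Proof.
move=> bm; rewrite (eq_bigr (fun x : 'I_m => if x == b :> nat then Q x : nat else 0)).
  by rewrite -big_mkcond (big_ord1_eq _ (fun x => Q x : nat)) bm.
by move=> x _; case: eqP.
Qed.

Lemma walk_countS n b : b < m ->
  walk_count m n.+1 0 b =
  (if 0 < b then walk_count m n 0 b.-1 else 0) +
  (if b.+1 < m then walk_count m n 0 b.+1 else 0).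
Proof.
move=> bm; rewrite walk_countE big_ffrcons.
have ord0_widen : ord0 = widen_ord (leqnSn n.+1) ord0 by exact: val_inj.
under eq_bigr => g _.
  under eq_bigr => x _.
    rewrite ord0_widen ffrcons_widen ffrcons_last is_walk_ffrcons.
    rewrite (_ : [&& _, _ & _] = (x == b :> nat) &&
               ((g ord0 == 0 :> nat) && is_walk g && is_step x (g ord_max))); last first.
      by case: (_ == 0); case: (_ == b); case: (is_walk g).
    over.
  rewrite (sum_ord_eq (fun x => (g ord0 == 0 :> nat) && is_walk g && is_step x (g ord_max))) //.
  rewrite -mulnb is_step_split // mulnDr.
  over.
rewrite big_split /=; congr addn; [case: (0 < b) | case: (b.+1 < m)];
  do ?[by rewrite big1 // => g _; rewrite muln0];
  by rewrite walk_countE; apply: eq_bigr => g _; rewrite /= mulnb andbA andbAC.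
Qed.

Lemma walk_count0 b : b < m -> walk_count m 0 0 b = (b == 0).
Proof.
move=> bm; rewrite walk_countE big_ffrcons.
have walk0 (g : {ffun 'I_1 -> 'I_m}) : is_walk g by apply/forallP => -[].
rewrite (eq_bigr (fun g => (b == 0) : nat)) => [|g _].
  by rewrite sum_nat_const card_ffun !card_ord mul1n.
under eq_bigr => x _.
  rewrite (_ : ord0 = ord_max) ?ffrcons_last ?walk0 ?andbT 1?andbC; last exact: val_inj.
  over.
by rewrite (sum_ord_eq (fun x => x == 0)).
Qed.

Lemma walk_count_short n b : b < m -> n < b -> walk_count m n 0 b = 0.
Proof.
elim: n b => [|n IH] b bm nb; first by rewrite walk_count0 //; case: b nb {bm}.
rewrite walk_countS // (IH b.-1) ?if_same ?add0n; [|lia|lia].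
by case: ifP => // b1; apply: IH => //; lia.
Qed.

Definition excess_walks u b := walk_count m (b + u.*2) 0 b.

Lemma excess_walksE u b : b < m ->
  excess_walks u b = ((b == 0) && (u == 0)) +
    (if 0 < b then excess_walks u b.-1 else 0) +
    (if (0 < u) && (b.+1 < m) then excess_walks u.-1 b.+1 else 0).
Proof.
move=> bm; rewrite /excess_walks.
case: b bm => [|b] bm; case: u => [|u] /=.
- by rewrite walk_count0.
- rewrite -addnn addSn addnS walk_countS //= add0n.
  by case: ifP => // _; congr walk_count; lia.
- rewrite double0 !addn0 walk_countS //.
  by case: ifP => bm1; rewrite ?(@walk_count_short b b.+2) // addn0.
- by rewrite add0n -!addnn !addnS addSn walk_countS.
Qed.

End StripWalks.

Definition excess_gf m N b : {poly int} := \poly_(u < N) (excess_walks m u b)%:Z.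

Lemma excess_gfE m N b : (b < m)%N ->
  excess_gf m N.+1 b = (b == 0%N)%:R
     + (if (0 < b)%N then excess_gf m N.+1 b.-1 else 0)
     + (if (b.+1 < m)%N then 'X * excess_gf m N b.+1 else 0).
Proof.
move=> bm; apply/polyP => i.
rewrite !coefD coefMn coef1 !coef_poly (excess_walksE i bm) !PoszD.
case: (b.+1 < m)%N; case: (posnP b) => [->|_] /=;
  rewrite ?coef0 ?coefXM ?coef_poly; case: i => [|i] /=; rewrite ?ltnS;
  try reflexivity; by case: ltnP; rewrite ?addr0 ?add0r.
Qed.

Lemma pp_rec c : pp c.+2 + 'X * pp c = pp c.+1.
Proof. by rewrite [pp c.+2]/= subrK. Qed.

Lemma pp_subn_rec m b : (b < m)%N ->
  pp m * (b == 0%N)%:R + (if (0 < b)%N then pp (m - 1 - b.-1) else 0)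
    + (if (b.+1 < m)%N then 'X * pp (m - 1 - b.+1) else 0) = pp (m - 1 - b).
Proof.
case: b => [|b] bm /=.
  rewrite mulr1 addr0 subn0.
  case: m bm => [|[|c]] // _; first by rewrite addr0.
  by rewrite /= !subn1 /= pp_rec.
rewrite mulr0 add0r; case: ltnP => bm1; last first.
  have -> : (m - 1 - b = 1)%N by lia.
  have -> : (m - 1 - b.+1 = 0)%N by lia.
  by rewrite addr0.
have -> : (m - 1 - b = (m - 1 - b.+2).+2)%N by lia.
have -> : (m - 1 - b.+1 = (m - 1 - b.+2).+1)%N by lia.
exact: pp_rec.
Qed.

Lemma pp_mul_excess_gf m N b : (b < m)%N ->
  eq_modX N (pp m * excess_gf m N b) (pp (m - 1 - b)).
Proof.
elim: N b => [|N IHN] b bm i iN //.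
have up_step c : (c.+1 < m)%N ->
    ('X * (pp m * excess_gf m N c.+1))`_i = ('X * pp (m - 1 - c.+1))`_i.
  by move=> cm; rewrite !coefXM; case: i iN => [|i] iN //; apply: IHN.
elim: b bm => [|b IHb] bm; rewrite excess_gfE // -(pp_subn_rec bm) !mulrDr !coefD.
  by case: ifP => [cm|_]; rewrite ?mulr0 // mulrCA up_step.
rewrite IHb ?(ltnW bm) //.
by case: ifP => [cm|_]; rewrite ?mulr0 // mulrCA up_step.
Qed.

Lemma pp_mul_Bm_gf m N : (0 < m)%N -> eq_modX N (pp m * excess_gf m N m.-1) 1.
Proof.
by move=> m0; have := @pp_mul_excess_gf m N m.-1; rewrite ltn_predL subn1 subnn; apply.
Qed.

(** * Matchings of a path *)

Section SparseSubsets.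
Local Close Scope ring_scope.

Definition sparse n (f : {ffun 'I_n -> bool}) :=
  [forall i : 'I_n, forall i' : 'I_n, f i && f i' ==> (i' != i.+1 :> nat)].

Definition last_free n (f : {ffun 'I_n -> bool}) := [forall i : 'I_n, f i ==> (i.+1 < n)].

Definition n_sparse n j :=
  \sum_(f : {ffun 'I_n -> bool}) (sparse f && (\sum_i (f i : nat) == j)).

Definition n_sparse_last_free n j :=
  \sum_(f : {ffun 'I_n -> bool}) [&& last_free f, sparse f & \sum_i (f i : nat) == j].

Lemma sum_ffrcons n (g : {ffun 'I_n -> bool}) x :
  \sum_(i < n.+1) (ffrcons g x i : nat) = \sum_(i < n) (g i : nat) + x.
Proof. exact: (big_ord_ffrcons _ _ _ (fun _ (y : bool) => (y : nat))). Qed.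

Lemma last_free_ffrcons n (g : {ffun 'I_n -> bool}) x : last_free (ffrcons g x) = ~~ x.
Proof.
rewrite /last_free forall_ord_recr ffrcons_last /= ltnn implybF.
case: x; rewrite ?andbF // andbT; apply/forallP => i.
by rewrite ffrcons_widen ltnS ltn_ord implybT.
Qed.

Lemma sparse_ffrcons n (g : {ffun 'I_n -> bool}) x :
  sparse (ffrcons g x) = sparse g && (x ==> last_free g).
Proof.
apply/idP/andP => [/forallP sp|[/forallP sp free] ].
  split.
    apply/forallP => i; apply/forallP => i'.
    by have /forallP/(_ (widen_ord (leqnSn n) i')) := sp (widen_ord (leqnSn n) i);
      rewrite !ffrcons_widen.
  apply/implyP => xT; apply/forallP => i; apply/implyP => gi; rewrite ltn_neqAle ltn_ord andbT.
  have /forallP/(_ ord_max) := sp (widen_ord (leqnSn n) i).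
  by rewrite ffrcons_widen ffrcons_last gi xT eq_sym.
apply/forallP => i; apply/forallP => i'.
case: (unliftP ord_max i) => [j ->|->]; last first.
  by apply/implyP => _; rewrite neq_ltn /= ltn_ord.
rewrite lift_max_widen ffrcons_widen.
case: (unliftP ord_max i') => [j' ->|->].
  by rewrite lift_max_widen ffrcons_widen; have /forallP := sp j; apply.
rewrite ffrcons_last; apply/implyP => /andP [gj xT].
by have /forallP/(_ j)/implyP/(_ gj) := implyP free xT; rewrite ltn_neqAle eq_sym => /andP [].
Qed.

Lemma sum_ffun0 (T : finType) (F : {ffun 'I_0 -> T} -> nat) (f0 : {ffun 'I_0 -> T}) :
  \sum_(f : {ffun 'I_0 -> T}) F f = F f0.
Proof. by rewrite (big_pred1 f0) // => f /=; apply/esym/eqP/ffunP => -[]. Qed.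

Lemma n_sparse0 j : n_sparse 0 j = (j == 0).
Proof.
rewrite /n_sparse (sum_ffun0 _ [ffun i : 'I_0 => false]) big_ord0 eq_sym.
by have -> : sparse [ffun i : 'I_0 => false] by apply/forallP => -[].
Qed.

Lemma n_sparse_last_free0 j : n_sparse_last_free 0 j = (j == 0).
Proof.
rewrite /n_sparse_last_free (sum_ffun0 _ [ffun i : 'I_0 => false]) big_ord0 eq_sym.
have -> : last_free [ffun i : 'I_0 => false] by apply/forallP => -[].
by have -> : sparse [ffun i : 'I_0 => false] by apply/forallP => -[].
Qed.

Lemma n_sparse_last_freeS n j : n_sparse_last_free n.+1 j = n_sparse n j.
Proof.
rewrite /n_sparse_last_free big_ffrcons; apply: eq_bigr => g _.
by rewrite big_bool /= !last_free_ffrcons !sparse_ffrcons !sum_ffrcons /= add0n addn0 andbT.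
Qed.

Lemma n_sparseS n j :
  n_sparse n.+1 j = n_sparse n j + (if j is j'.+1 then n_sparse_last_free n j' else 0).
Proof.
rewrite /n_sparse /n_sparse_last_free big_ffrcons.
case: j => [|j].
  rewrite addn0; apply: eq_bigr => g _.
  by rewrite big_bool /= !sparse_ffrcons !sum_ffrcons /= addn0 addn1 andbT andbF.
rewrite -big_split /=; apply: eq_bigr => g _.
rewrite big_bool /= !sparse_ffrcons !sum_ffrcons /= addn0 addn1 eqSS andbT.
by rewrite addnC; case: (sparse g); case: (last_free g).
Qed.

Lemma n_sparse_closed n :
  (forall j, n_sparse_last_free n j = 'C(n - j, j)) /\
  (forall j, n_sparse n j = 'C(n.+1 - j, j)).
Proof.
elim: n => [|n [IHfree IH]].
  by split=> -[|[|j]]; rewrite ?n_sparse0 ?n_sparse_last_free0.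
split=> j; first by rewrite n_sparse_last_freeS IH.
by rewrite n_sparseS IH; case: j => [|j]; rewrite ?bin0 // IHfree !subSS binS_sub.
Qed.

Definition sparse_last_free_set n (S : {set 'I_n}) :=
  last_free [ffun i => i \in S] && sparse [ffun i => i \in S].

Lemma card_sparse_last_free_set n j :
  #|[set S : {set 'I_n} | sparse_last_free_set S && (#|S| == j)]| = 'C(n - j, j).
Proof.
case: (n_sparse_closed n) => <- _.
rewrite /n_sparse_last_free -sum1_card big_mkcond /=.
rewrite (reindex (fun f : {ffun 'I_n -> bool} => [set i | f i])) /=; last first.
  exists (fun S : {set 'I_n} => [ffun i => i \in S]) => [f _|S _].
    by apply/ffunP => i; rewrite ffunE inE.
  by apply/setP => i; rewrite inE ffunE.
apply: eq_bigr => f _; rewrite inE /sparse_last_free_set.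
have -> : [ffun i => i \in [set i0 | f i0]] = f by apply/ffunP => i; rewrite ffunE inE.
have -> : #|[set i | f i]| = \sum_i (f i : nat).
  by rewrite -sum1_card big_mkcond; apply: eq_bigr => i _; rewrite inE; case: (f i).
by rewrite -andbA; case: [&& _, _ & _].
Qed.

End SparseSubsets.

Section PathMatchings.
Local Close Scope ring_scope.
Variable n : nat.
Implicit Types (M : {set 'I_n * 'I_n}) (S : {set 'I_n}).

Lemma matching_edge M e : is_matching M -> e \in M -> val e.2 = (val e.1).+1.
Proof. by move=> /andP [/forallP edge _] eM; have /implyP/(_ eM)/eqP := edge e. Qed.

Lemma matching_disjoint M e1 e2 : is_matching M -> e1 \in M -> e2 \in M -> e1 != e2 ->
  [&& e1.1 != e2.1, e1.1 != e2.2, e1.2 != e2.1 & e1.2 != e2.2].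
Proof.
move=> /andP [_ /forallP disj] e1M e2M.
by have /implyP/(_ e1M)/forallP/(_ e2)/implyP/(_ e2M)/implyP := disj e1.
Qed.

Lemma edge_eq (e e' : 'I_n * 'I_n) : e.1 = e'.1 -> val e.2 = val e'.2 -> e = e'.
Proof. by case: e e' => [a b] [c d] /= -> /val_inj ->. Qed.

(* A matching of P_n is determined by its set of left endpoints. *)
Definition left_ends M : {set 'I_n} := [set e.1 | e in M].

Lemma left_ends_sub M M' : is_matching M -> is_matching M' ->
  left_ends M \subset left_ends M' -> M \subset M'.
Proof.
move=> mM mM' /subsetP sub; apply/subsetP => e eM.
have /sub /imsetP [e' e'M' e1] : e.1 \in left_ends M by apply/imsetP; exists e.
by rewrite (@edge_eq e e') // (matching_edge mM eM) (matching_edge mM' e'M') e1.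
Qed.

Lemma card_left_ends M : is_matching M -> #|left_ends M| = #|M|.
Proof.
move=> mM; apply: card_in_imset => e e' eM e'M e1.
by apply: edge_eq; rewrite // (matching_edge mM eM) (matching_edge mM e'M) e1.
Qed.

Lemma left_ends_sparse M : is_matching M -> sparse_last_free_set (left_ends M).
Proof.
move=> mM; apply/andP; split.
  apply/forallP => i; rewrite ffunE; apply/implyP => /imsetP [e eM ->].
  by rewrite -(matching_edge mM eM) ltn_ord.
apply/forallP => i; apply/forallP => i'; rewrite !ffunE.
apply/implyP => /andP [/imsetP [e eM ->] /imsetP [e' e'M ->]]; apply/eqP => e'e.
have ne : e != e' by apply/eqP => ee; move: e'e; rewrite ee; lia.
have /and4P [_ _ /eqP shared _] := matching_disjoint mM eM e'M ne.
by apply: shared; apply/val_eqP; rewrite /= (matching_edge mM eM) e'e.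
Qed.

Definition edges_from S : {set 'I_n * 'I_n} :=
  [set e | (e.1 \in S) && (val e.2 == (val e.1).+1)].

Lemma edges_from_matching S : sparse_last_free_set S -> is_matching (edges_from S).
Proof.
move=> /andP [_ /forallP sp]; apply/andP; split.
  by apply/forallP => e; apply/implyP; rewrite inE => /andP [].
have nonadj a b : a \in S -> b \in S -> val b = (val a).+1 -> False.
  move=> aS bS ab; have /forallP/(_ b)/implyP := sp a.
  by rewrite !ffunE aS bS ab eqxx => /(_ isT).
apply/forallP => e1; apply/implyP; rewrite inE => /andP [e1S /eqP h1].
apply/forallP => e2; apply/implyP; rewrite inE => /andP [e2S /eqP h2].
apply/implyP => /eqP ne; apply/and4P; split; apply/eqP => h.
- by apply: ne; apply: edge_eq; rewrite // h1 h2 h.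
- by apply: (nonadj e2.1 e1.1) => //; rewrite h -h2.
- by apply: (nonadj e1.1 e2.1) => //; rewrite -h h1.
- apply: ne; apply: edge_eq; rewrite ?h //; apply: val_inj.
  by apply/succn_inj; rewrite -h1 -h2 h.
Qed.

Lemma left_ends_edges_from S : sparse_last_free_set S -> left_ends (edges_from S) = S.
Proof.
move=> /andP [/forallP free _]; apply/setP => i; apply/imsetP/idP.
  by case=> e; rewrite inE => /andP [eS _] ->.
move=> iS; have := free i; rewrite ffunE iS /= => lt.
by exists (i, Ordinal lt); rewrite // inE /= iS eqxx.
Qed.

Lemma n_matchingsE j : n_matchings n j = 'C(n - j, j).
Proof.
rewrite -card_sparse_last_free_set /n_matchings -(card_in_imset (f := left_ends)); last first.
  move=> M M'; rewrite !inE => /andP [mM _] /andP [mM' _] eq_ends.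
  by apply/eqP; rewrite eqEsubset !left_ends_sub // eq_ends subxx.
apply: eq_card => S; rewrite [RHS]inE; apply/imsetP/idP.
  move=> [M]; rewrite inE => /andP [mM /eqP cM] ->.
  by rewrite left_ends_sparse // card_left_ends // cM eqxx.
move=> /andP [sS /eqP cS]; exists (edges_from S); last by rewrite left_ends_edges_from.
rewrite inE edges_from_matching //= -card_left_ends ?edges_from_matching //.
by rewrite left_ends_edges_from // cS.
Qed.

End PathMatchings.

Lemma fps_coef_pp_ratio (m : nat) (alpha : seq nat) (t k r : nat) : (0 < m)%N ->
  fps_coef ((\prod_(a <- alpha) pp a) * pp m ^+ t) (pp m ^+ (t + k)) r =
  \sum_(j : {ffun 'I_(size alpha) -> 'I_r.+1})
    \sum_(u : {ffun 'I_k -> 'I_r.+1}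
            | ((\sum_(i < size alpha) (j i : nat)) + (\sum_(v < k) (u v : nat)) == r)%N)
      (-1) ^+ (\sum_(i < size alpha) (j i : nat))%N
      * (\prod_(i < size alpha) 'C(nth 0%N alpha i - j i, j i))%N%:Z
      * (\prod_(v < k) Bm m (u v))%N%:Z.
Proof.
move=> m0; set B := excess_gf m r.+1 m.-1.
have -> : fps_coef ((\prod_(a <- alpha) pp a) * pp m ^+ t) (pp m ^+ (t + k)) r =
          ((\prod_(a <- alpha) pp a) * \prod_(v < k) B)`_r.
  apply: fps_coef_eq_modX; first exact: coef0_pp_exp.
  rewrite prodr_const card_ord exprD mulrACA [_ * \prod_(_ <- _) _]mulrC -exprMn.
  rewrite -[X in eq_modX _ _ X]mulr1; apply: eq_modX_mul => //.
  exact/eq_modX_exp1/pp_mul_Bm_gf.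
rewrite (big_nth 0%N) big_mkord coef_mul_prod_ffun.
apply: eq_bigr => j _; apply: eq_bigr => u _.
rewrite !(big_morph Posz PoszM (erefl 1%:Z)) expr_sum -big_split /=.
congr (_ * _); first by apply: eq_bigr => i _; rewrite coef_pp.
by apply: eq_bigr => v _; rewrite coef_poly ltn_ord.
Qed.

Lemma prod_pp_geq m xi : all (fun x => (x <= m)%N) xi ->
  \prod_(a <- xi | ~~ (a < m)%N) pp a = pp m ^+ count_mem m xi.
Proof.
elim: xi => [|x xi IH] /=; first by rewrite big_nil.
rewrite big_cons => /andP [xm /IH ->].
case: ltnP => [/ltn_eqF -> //| mx].
by rewrite (@anti_leq x m) ?xm // eqxx exprS.
Qed.

Theorem theorem1p2 (m : nat) (xi : seq nat) (mu : nat) :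
  (1 <= m)%N ->
  all (fun x => (0 < x <= m)%N) xi -> sorted geq xi ->
  let mu1 := (mu %/ m)%N in
  let mu0 := (mu %% m)%N in
  let t := count_mem m xi in
  (t <= mu1.+1)%N ->
  let k := (mu1.+1 - t)%N in
  let alpha := ((m - mu0 - 1)%N :: filter (fun x => (x < m)%N) xi) in
  let L1 := size alpha in
  forall r : nat,
  let a := fps_coef (pp (m - mu0 - 1) * pxi xi) (pp m ^+ mu1.+1) r in
  a = \sum_(j : {ffun 'I_L1 -> 'I_r.+1})
        \sum_(u : {ffun 'I_k -> 'I_r.+1}
                | ((\sum_(i < L1) (j i : nat)) + (\sum_(v < k) (u v : nat)) == r)%N)
          (-1) ^+ (\sum_(i < L1) (j i : nat))%N
          * (\prod_(i < L1) 'C(nth 0%N alpha i - j i, j i))%N%:Z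
          * (\prod_(v < k) Bm m (u v))%N%:Z
  /\
  a = \sum_(j : {ffun 'I_L1 -> 'I_r.+1})
        \sum_(u : {ffun 'I_k -> 'I_r.+1}
                | ((\sum_(i < L1) (j i : nat)) + (\sum_(v < k) (u v : nat)) == r)%N)
          (-1) ^+ (\sum_(i < L1) (j i : nat))%N
          * (\prod_(i < L1) n_matchings (nth 0%N alpha i) (j i))%N%:Z
          * (\prod_(v < k) Bm m (u v))%N%:Z.
Proof.
move=> m_gt0 xi_bounded _ mu1 mu0 t t_le k alpha L1 r a.
have xi_le_m : all (fun x => (x <= m)%N) xi by apply: sub_all xi_bounded => x /andP [].
have num_split : pp (m - mu0 - 1) * pxi xi = (\prod_(b <- alpha) pp b) * pp m ^+ t.
  by rewrite big_cons /pxi (bigID (fun b => b < m)%N) prod_pp_geq // -big_filter mulrA.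
have den_split : pp m ^+ mu1.+1 = pp m ^+ (t + k) by rewrite subnKC.
rewrite /a num_split den_split fps_coef_pp_ratio //; split=> //.
apply: eq_bigr => j _; apply: eq_bigr => u _.
by congr (_ * _%:Z * _); apply: eq_bigr => i _; rewrite n_matchingsE.
Qed.
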